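(* Let $A$ be a compact Hausdorff topological algebra. Then $A$ is simple if and only if $\Delta_A=\{(a,a)\mid a\in A\}$ and $A\times A$ are the only closed congruences on $A$.
   Context: A topological algebra is an algebra (a set with finitary operations of a fixed type) equipped with a topology such that every operation is continuous. A congruence on $A$ is an equivalence relation on $A$ that is a subalgebra of $A\times A$; it is closed if it is closed in the product space $A\times A$. A Hausdorff topological algebra $A$ is called simple if every non-constant continuous homomorphism from $A$ into any Hausdorff topological algebra of the same type is injective. *)

From HB Require Import structures.
From mathcomp Require Import all_boot all_order all_algebra.
From mathcomp Require Import all_classical all_reals all_analysis.
Set Implicit Arguments. Unset Strict Implicit. Unset Printing Implicit Defensive.
Local Open Scope classical_set_scope.

(* A type (signature): operation symbols F with arities ar : F -> nat.
   An algebra of this type on carrier A: for each f, an operation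
   ops f : A^(ar f) -> A, where A^(ar f) = 'I_(ar f) -> A carries the
   product topology ({ptws _ -> _}). *)
Definition operations (F : Type) (ar : F -> nat) (A : Type) :=
  forall f : F, {ptws 'I_(ar f) -> A} -> A.

Definition continuous_ops (F : Type) (ar : F -> nat) (A : topologicalType)
  (opsA : operations ar A) : Prop :=
  forall f : F, continuous (opsA f).

Definition homomorphism (F : Type) (ar : F -> nat) (A B : Type)
  (opsA : operations ar A) (opsB : operations ar B) (h : A -> B) : Prop :=
  forall (f : F) (x : 'I_(ar f) -> A), h (opsA f x) = opsB f (fun i => h (x i)).

Definition simple_talg (F : Type) (ar : F -> nat) (A : topologicalType)
  (opsA : operations ar A) : Prop :=
  forall (B : topologicalType) (opsB : operations ar B),
    continuous_ops opsB -> hausdorff_space B ->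
    forall h : A -> B, continuous h -> homomorphism opsA opsB h ->
      (exists a b : A, h a <> h b) -> injective h.

Definition congruence (F : Type) (ar : F -> nat) (A : Type)
  (opsA : operations ar A) (R : set (A * A)) : Prop :=
  [/\ (forall a, R (a, a)),
      (forall a b, R (a, b) -> R (b, a)),
      (forall a b c, R (a, b) -> R (b, c) -> R (a, c)) &
      (forall (f : F) (x y : 'I_(ar f) -> A),
          (forall i, R (x i, y i)) -> R (opsA f x, opsA f y))].

Definition diag_rel (A : Type) : set (A * A) := [set p | p.1 = p.2].
Arguments diag_rel A : clear implicits.

From HB Require Import structures.
From mathcomp Require Import all_boot all_order all_algebra.
From mathcomp Require Import all_classical all_reals all_analysis.

(* The kernel of a continuous homomorphism into a Hausdorff algebra is a
   closed congruence; it is the diagonal iff the map is injective and the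
   whole square iff the map is constant.  Conversely, every closed congruence
   R on a compact Hausdorff algebra A is such a kernel: because A and A x A
   are compact, the quotient map A -> A/R is closed, so A/R is Hausdorff (A is
   normal and the classes of R are closed), and the operations descend to
   continuous operations on A/R, since a map out of (A/R)^n is continuous as
   soon as its composite with the closed surjection A^n -> (A/R)^n is. *)

Local Open Scope classical_set_scope.
Local Open Scope quotient_scope.

Lemma continuous_ptws (T V : topologicalType) (I : Type)
    (g : T -> {ptws I -> V}) :
  (forall i, continuous (g ^~ i)) -> continuous g.
Proof.
move=> gc x; apply/cvg_sup => i; move: x.
apply/(@continuousP _ (initial_topology (@^~ i))) => _ [B oB <-].
by move/continuousP: (gc i); apply.
Qed.

Lemma closed_image_compact (X Y : topologicalType) (p : X -> Y) (C : set X) :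
  compact [set: X] -> hausdorff_space Y -> continuous p -> closed C ->
  closed (p @` C).
Proof.
move=> cX hY cp cC; apply: compact_closed => //.
apply: continuous_compact; first exact: continuous_subspaceT.
by rewrite -[C]setTI; apply: compact_closedI.
Qed.

Lemma continuous_factor (X Y Z : topologicalType) (p : X -> Y) (s : Y -> X)
    (g : Y -> Z) :
  compact [set: X] -> hausdorff_space Y -> continuous p -> cancel s p ->
  continuous (g \o p) -> continuous g.
Proof.
move=> cX hY cp sK cgp; apply/continuous_closedP => S cS.
suff -> : g @^-1` S = p @` ((g \o p) @^-1` S).
  by apply: closed_image_compact => //; move/continuous_closedP: cgp; apply.
apply/seteqP; split => [y Sy|_ [x Sx <-] //].
by exists (s y); rewrite /preimage /= sK.
Qed.

Definition kernel {A B : Type} (h : A -> B) : set (A * A) :=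
  [set p | h p.1 = h p.2].

Lemma closed_kernel {A B : topologicalType} {h : A -> B} :
  continuous h -> hausdorff_space B -> closed (kernel h).
Proof.
move=> ch hB; rewrite -openC openE => -[a b] /= nhab.
move: hB; rewrite open_hausdorff => /(_ (h a) (h b)).
case=> [|[U V] /=]; first exact/eqP.
rewrite !inE => -[Ua Vb] [oU oV /eqP UV0].
exists (h @^-1` U, h @^-1` V) => /=.
  by split; apply: ch; apply: open_nbhs_nbhs.
move=> [x y] [/= Ux Vy] /= hxy; rewrite hxy in Ux.
by move/eqP: UV0 => UV0; have : (U `&` V) (h y) by []; rewrite UV0.
Qed.

Lemma kernel_eq_diag {A B : Type} {h : A -> B} :
  kernel h = diag_rel A <-> injective h.
Proof.
split=> [kh x y hxy|hi]; first by have : kernel h (x, y) by []; rewrite kh.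
apply/seteqP; split=> -[x y]; rewrite /kernel /diag_rel /=.
  exact: hi.
by move=> ->.
Qed.

Lemma kernel_eq_setT {A B : Type} {h : A -> B} :
  kernel h = [set: A * A] <-> forall a b, h a = h b.
Proof.
split=> [kh a b|hc]; first by have : kernel h (a, b) by rewrite kh.
by apply/seteqP; split=> // -[a b] _; exact: hc.
Qed.

Lemma congruence_kernel {F : Type} {ar : F -> nat} {A B : Type}
    {opsA : operations ar A} {opsB : operations ar B} {h : A -> B} :
  homomorphism opsA opsB h -> congruence opsA (kernel h).
Proof.
rewrite /kernel => hh; split=> /=.
- by [].
- by move=> a b ->.
- by move=> a b c -> ->.
move=> f x y hxy; rewrite !hh.
by congr (opsB f _); apply: funext => i; exact: hxy.
Qed.

Definition is_equivalence {A : Type} (R : set (A * A)) : Prop :=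
  [/\ forall a, R (a, a),
      forall a b, R (a, b) -> R (b, a) &
      forall a b c, R (a, b) -> R (b, c) -> R (a, c)].

Lemma congruence_is_equivalence {F : Type} {ar : F -> nat} {A : Type}
    {opsA : operations ar A} {R : set (A * A)} :
  congruence opsA R -> is_equivalence R.
Proof. by case. Qed.

Definition rel_of_set {A : Type} (R : set (A * A)) : rel A :=
  fun a b => `[< R (a, b) >].

Section ClosedEquivalence.
Context {A : topologicalType} {R : set (A * A)}.
Hypothesis R_equiv : is_equivalence R.

Let R_sym a b : R (a, b) -> R (b, a).
Proof. by case: R_equiv => _ + _; apply. Qed.

Let R_trans a b c : R (a, b) -> R (b, c) -> R (a, c).
Proof. by case: R_equiv => _ _; apply. Qed.

Lemma rel_of_set_equiv : equiv_class_of (rel_of_set R).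
Proof.
split=> [a|a b|b a c /asboolP Rab /asboolP Rbc].
- by apply/asboolP; case: R_equiv.
- by apply/asboolP/asboolP; exact: R_sym.
- exact/asboolP/(R_trans _ _ _ Rab Rbc).
Qed.

Definition quotient_by :=
  quotient_topology {eq_quot EquivRelPack rel_of_set_equiv}.

Local Notation pi := (\pi_quotient_by : A -> quotient_by).

Lemma pi_quotient_eq a b : pi a = pi b <-> R (a, b).
Proof. by split=> [/eqmodP/asboolP|Rab]; last apply/eqmodP/asboolP. Qed.

Lemma kernel_pi_quotient : kernel pi = R.
Proof. by apply/seteqP; split=> -[a b] /pi_quotient_eq. Qed.

Lemma closed_quotientE (S : set quotient_by) : closed S = closed (pi @^-1` S).
Proof. by rewrite -openC -[in RHS]openC. Qed.

Section Compact.
Hypotheses (A_hausdorff : hausdorff_space A) (A_compact : compact [set: A])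
  (R_closed : closed R).

Lemma closed_pi_image (C : set A) : closed C -> closed (pi @` C).
Proof.
move=> cC; rewrite closed_quotientE.
have -> : pi @^-1` (pi @` C) = snd @` ((C `*` [set: A]) `&` R).
  apply/seteqP; split=> [b [a Ca /pi_quotient_eq Rab]|].
    by exists (a, b).
  by move=> _ [[a b] [[/= Ca _] Rab] <-]; exists a => //; exact/pi_quotient_eq.
apply: closed_image_compact => //.
- by rewrite -setXTT; exact: compact_setX.
- by move=> p; exact: cvg_snd.
apply: closedI => //; rewrite setXT.
by apply: (proj1 (continuous_closedP _)) => // p; exact: cvg_fst.
Qed.

Lemma closed_pi_fiber (y : quotient_by) : closed (pi @^-1` [set y]).
Proof.
have -> : [set y] = pi @` [set repr y] by rewrite image_set1 reprK.
apply: (proj1 (continuous_closedP _)); first exact: pi_continuous.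
exact/closed_pi_image/(compact_closed A_hausdorff)/compact_set1.
Qed.

Lemma hausdorff_quotient : hausdorff_space quotient_by.
Proof.
rewrite open_hausdorff => y z yz.
set K := pi @^-1` [set y]; set L := pi @^-1` [set z].
have KL : set_nbhs K (~` L).
  apply/set_nbhsP; exists (~` L); split=> //.
  - exact/closed_openC/closed_pi_fiber.
  - by move=> a ya za; move/eqP: yz; apply; rewrite -ya -za.
have [W /set_nbhsP [U [oU KU UW]] clWL] :=
  compact_normal A_hausdorff A_compact (closed_pi_fiber y) KL.
(* open, being complements of images of closed sets under the closed map [pi] *)
exists (~` (pi @` ~` U), ~` (pi @` closure W)) => /=.
  rewrite !inE; split=> [[a nUa ay]|[a clWa az]].
    by apply: nUa; apply: KU; rewrite /K /= ay.
  by apply: (clWL a clWa); rewrite /L /= az.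
split.
- exact/closed_openC/closed_pi_image/open_closedC.
- exact/closed_openC/closed_pi_image/closed_closure.
apply/eqP/seteqP; split=> // w [nUw nWw]; rewrite -(reprK w) in nUw nWw.
have [Uw|nUrw] := pselect (U (repr w)).
  by apply: nWw; exists (repr w) => //; exact/subset_closure/UW.
by apply: nUw; exists (repr w).
Qed.

End Compact.
End ClosedEquivalence.

Section QuotientAlgebra.
Variables (F : Type) (ar : F -> nat) (A : topologicalType)
  (opsA : operations ar A) (R : set (A * A)).
Hypothesis R_congr : congruence opsA R.

Let R_equiv := congruence_is_equivalence R_congr.
Local Notation Q := (quotient_by R_equiv).
Local Notation pi := (\pi_Q : A -> Q).

Definition quotient_ops : operations ar Q :=
  fun f y => pi (opsA f (fun i => repr (y i))).

Lemma homomorphism_pi : homomorphism opsA quotient_ops pi.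
Proof.
move=> f x; apply/pi_quotient_eq; case: R_congr => _ R_sym _ R_ops.
by apply: R_ops => i; apply/R_sym/pi_quotient_eq; rewrite reprK.
Qed.

Lemma continuous_quotient_ops : continuous_ops opsA -> hausdorff_space A ->
  compact [set: A] -> closed R -> continuous_ops quotient_ops.
Proof.
move=> opsA_cont A_hausdorff A_compact R_closed f.
pose p (x : {ptws 'I_(ar f) -> A}) : {ptws 'I_(ar f) -> Q} := fun i => pi (x i).
apply: (@continuous_factor _ _ _ p (fun y i => repr (y i))).
- have := tychonoff (fun _ : 'I_(ar f) => A_compact).
  by congr compact; apply/seteqP.
- by apply: hausdorff_product => _; exact: hausdorff_quotient.
- apply: continuous_ptws => i x.
  apply: (@continuous_comp _ _ _ (fun y : {ptws 'I_(ar f) -> A} => y i) pi).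
    exact: (@proj_continuous 'I_(ar f) (fun _ => A) i).
  exact: pi_continuous.
- by move=> y; apply: funext => i; rewrite /p reprK.
have -> : quotient_ops f \o p = pi \o opsA f.
  by apply: funext => x /=; rewrite homomorphism_pi.
by move=> x; apply: continuous_comp; [exact: opsA_cont | exact: pi_continuous].
Qed.

End QuotientAlgebra.

Theorem proposition4p1 (F : Type) (ar : F -> nat) (A : topologicalType)
  (opsA : operations ar A) (hcont : continuous_ops opsA)
  (hHaus : hausdorff_space A) (hcpt : compact [set: A]) :
  simple_talg opsA <->
  (forall R : set (A * A), congruence opsA R -> closed R ->
     R = diag_rel A \/ R = [set: A * A]).
Proof.
split=> [simple R R_congr R_closed|only_trivial B opsB opsB_cont B_hausdorff].
  pose R_equiv := congruence_is_equivalence R_congr.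
  pose pi := \pi_(quotient_by R_equiv) : A -> _.
  rewrite -(kernel_pi_quotient R_equiv).
  have [[a [b nab]]|pi_const] := pselect (exists a b, pi a <> pi b).
    left; apply/kernel_eq_diag; apply: (simple _ _ _ _ pi) => //.
    - exact: continuous_quotient_ops.
    - exact: hausdorff_quotient.
    - exact: pi_continuous.
    - exact: homomorphism_pi.
    - by exists a, b.
  right; apply/kernel_eq_setT => a b; apply: contrapT => nab.
  by apply: pi_const; exists a, b.
move=> h h_cont h_hom [a [b nab]]; apply/kernel_eq_diag.
have [//|/kernel_eq_setT h_const] :=
  only_trivial _ (congruence_kernel h_hom) (closed_kernel h_cont B_hausdorff).
by case: (nab (h_const a b)).
Qed.
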